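(* Let $A\in\mathbb R^{n\times n}$ be symmetric, $b\in\mathbb R^n$, $-\infty<\alpha<\beta<+\infty$. Then the two-sided trust region subproblem \[ ({\rm TTRS})\quad \min_x\ \tfrac12x^TAx+b^Tx\quad\text{s.t.}\quad \alpha\le x^Tx\le\beta \] is equivalent to \[ ({\rm CTTRS})\quad \min_{x,t}\ \tfrac12x^T(A-\lambda_{\min}(A)I)x+b^Tx+\tfrac12\lambda_{\min}(A)t\quad\text{s.t.}\quad \alpha\le t\le\beta,\quad \left\|\begin{pmatrix}x\\ \frac{t-1}{2}\end{pmatrix}\right\|\le\frac{t+1}{2}, \] in the sense that $x^*$ globally solves (TTRS) if and only if $(x^*,t^* ):=(x^*,x^{*T}x^* )$ globally solves (CTTRS).
   Context: $\lambda_{\min}(A)$ is the smallest eigenvalue of $A$; $\|\cdot\|$ is the Euclidean norm. *)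

From HB Require Import structures.
From mathcomp Require Import all_boot all_order all_algebra.
From mathcomp Require Import reals.
Set Implicit Arguments. Unset Strict Implicit. Unset Printing Implicit Defensive.
Import Order.TTheory GRing.Theory Num.Theory.
Local Open Scope ring_scope.

Definition is_lambda_min (R : realType) (n : nat) (A : 'M[R]_n) (l : R) : Prop :=
  eigenvalue A l /\ (forall m : R, eigenvalue A m -> l <= m).

Definition stack_norm (R : realType) (n : nat) (x : 'cV[R]_n) (s : R) : R :=
  Num.sqrt (\sum_(i < n) (x i 0) ^+ 2 + s ^+ 2).

Definition qform (R : realType) (n : nat) (M : 'M[R]_n) (x : 'cV[R]_n) : R :=
  (x^T *m M *m x) 0 0.
Definition dotv (R : realType) (n : nat) (b x : 'cV[R]_n) : R := (b^T *m x) 0 0.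

Definition ttrs_obj (R : realType) (n : nat) (A : 'M[R]_n) (b x : 'cV[R]_n) : R :=
  2^-1 * qform A x + dotv b x.
Definition ttrs_feas (R : realType) (n : nat) (alpha beta : R) (x : 'cV[R]_n) : Prop :=
  alpha <= dotv x x <= beta.
Definition ttrs_global_sol (R : realType) (n : nat) (A : 'M[R]_n) (b : 'cV[R]_n)
    (alpha beta : R) (xs : 'cV[R]_n) : Prop :=
  ttrs_feas alpha beta xs /\
  forall x, ttrs_feas alpha beta x -> ttrs_obj A b xs <= ttrs_obj A b x.

(* CTTRS, with lam = lambda_min(A) *)
Definition cttrs_obj (R : realType) (n : nat) (A : 'M[R]_n) (b : 'cV[R]_n) (lam : R)
    (x : 'cV[R]_n) (t : R) : R :=
  2^-1 * qform (A - lam%:M) x + dotv b x + 2^-1 * lam * t.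
Definition cttrs_feas (R : realType) (n : nat) (alpha beta : R) (x : 'cV[R]_n) (t : R)
    : Prop :=
  alpha <= t <= beta /\ stack_norm x ((t - 1) / 2) <= (t + 1) / 2.
Definition cttrs_global_sol (R : realType) (n : nat) (A : 'M[R]_n) (b : 'cV[R]_n)
    (lam alpha beta : R) (xs : 'cV[R]_n) (ts : R) : Prop :=
  cttrs_feas alpha beta xs ts /\
  forall x t, cttrs_feas alpha beta x t ->
    cttrs_obj A b lam xs ts <= cttrs_obj A b lam x t.

From HB Require Import structures.
From mathcomp Require Import all_boot all_order all_algebra.
From mathcomp Require Import reals.
From mathcomp Require Import ring lra.
Import Order.TTheory GRing.Theory Num.Theory.
Local Open Scope ring_scope.

(** The cone constraint of (CTTRS) says exactly [x^T x <= t], and on the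
    surface [t = x^T x] the two objectives agree, so (CTTRS) is a relaxation
    of (TTRS) that is tight at [(x, x^T x)]. Conversely, a feasible [(x, t)]
    with [x^T x < t] is dominated by a (TTRS)-feasible point: move [x] along
    an eigenvector [w] of [lambda_min(A)], oriented so that [b^T w <= 0],
    until [y^T y = t]; along [w] the quadratic part of the TTRS objective
    grows exactly like [lambda_min(A)/2 * (y^T y - x^T x)], and the linear
    part does not increase. *)

Set Implicit Arguments. Unset Strict Implicit.

Lemma quadratic_nonneg_root (R : rcfType) (q p d : R) :
  0 < q -> 0 <= d -> exists2 s, 0 <= s & q * s ^+ 2 + 2 * p * s = d.
Proof.
move=> q0 d0; have qd0 : 0 <= q * d := mulr_ge0 (ltW q0) d0.
have disc0 : 0 <= p ^+ 2 + q * d by rewrite addr_ge0 ?sqr_ge0.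
have r2 := sqr_sqrtr disc0; have r0 := sqrtr_ge0 (p ^+ 2 + q * d).
move: r2 r0; set r := Num.sqrt _ => r2 r0.
have pr : p <= r by nra.
have qs : q * ((r - p) / q) = r - p by rewrite mulrCA divff ?mulr1 // gt_eqF.
exists ((r - p) / q); first by rewrite divr_ge0 ?subr_ge0 // ltW.
apply: (mulfI (lt0r_neq0 q0)).
have -> : q * (q * ((r - p) / q) ^+ 2 + 2 * p * ((r - p) / q)) =
  (q * ((r - p) / q)) ^+ 2 + 2 * p * (q * ((r - p) / q)) by ring.
by rewrite qs; nra.
Qed.

Section InnerProduct.
Variables (R : realType) (n : nat).
Implicit Types (x y z : 'cV[R]_n) (M : 'M[R]_n).

Lemma dotvE x y : dotv x y = \sum_i x i 0 * y i 0.
Proof. by rewrite /dotv !mxE; apply: eq_bigr => i _; rewrite mxE. Qed.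

Lemma dotvC x y : dotv x y = dotv y x.
Proof. by rewrite !dotvE; apply: eq_bigr => i _; rewrite mulrC. Qed.

Lemma dotvDr x y z : dotv x (y + z) = dotv x y + dotv x z.
Proof. by rewrite /dotv mulmxDr mxE. Qed.

Lemma dotvZr x a y : dotv x (a *: y) = a * dotv x y.
Proof. by rewrite /dotv -scalemxAr mxE. Qed.

Lemma dotvDl x y z : dotv (y + z) x = dotv y x + dotv z x.
Proof. by rewrite dotvC dotvDr !(dotvC x). Qed.

Lemma dotvZl x a y : dotv (a *: y) x = a * dotv y x.
Proof. by rewrite dotvC dotvZr dotvC. Qed.

Lemma dotvNl x y : dotv (- y) x = - dotv y x.
Proof. by rewrite -scaleN1r dotvZl mulN1r. Qed.

Lemma dotvvE x : dotv x x = \sum_i x i 0 ^+ 2.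
Proof. by rewrite dotvE; apply: eq_bigr => i _; rewrite expr2. Qed.

Lemma dotv_ge0 x : 0 <= dotv x x.
Proof. by rewrite dotvvE; apply: sumr_ge0 => i _; rewrite sqr_ge0. Qed.

Lemma dotv_gt0 x : x != 0 -> 0 < dotv x x.
Proof.
move=> x0; have [i xi0] : exists i, x i 0 != 0.
  apply/existsP; apply: contraR x0 => /existsPn x0.
  by apply/eqP/matrixP => i j; rewrite ord1 mxE; apply/eqP/negbNE/x0.
rewrite dotvvE (bigD1 i) //= ltr_pwDl ?exprn_even_gt0 //.
by apply: sumr_ge0 => j _; rewrite sqr_ge0.
Qed.

Lemma qformE M x : qform M x = dotv x (M *m x).
Proof. by rewrite /qform /dotv mulmxA. Qed.

Lemma dotv_mulmx M x y : dotv x (M *m y) = dotv (M^T *m x) y.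
Proof. by rewrite /dotv trmx_mul trmxK mulmxA. Qed.

Lemma qform_shift M lam x : qform (M - lam%:M) x = qform M x - lam * dotv x x.
Proof. by rewrite !qformE mulmxBl mul_scalar_mx dotvDr -scaleNr dotvZr mulNr. Qed.

Lemma stack_normP x t :
  stack_norm x ((t - 1) / 2) <= (t + 1) / 2 <-> dotv x x <= t.
Proof.
rewrite /stack_norm -dotvvE.
set y := _ + _; have y0 : 0 <= y by rewrite addr_ge0 ?dotv_ge0 ?sqr_ge0.
have r2 := sqr_sqrtr y0; have r0 := sqrtr_ge0 y; have x0 := dotv_ge0 x.
move: r2 r0; set r := Num.sqrt y => r2 r0.
have ey : y = dotv x x + ((t - 1) / 2) ^+ 2 by [].
split=> h.
- have : r ^+ 2 <= ((t + 1) / 2) ^+ 2 by nra.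
  by rewrite r2 ey; nra.
- have : y <= ((t + 1) / 2) ^+ 2 by rewrite ey; nra.
  by rewrite -r2; nra.
Qed.

End InnerProduct.

Section TrustRegion.
Variables (R : realType) (n : nat) (A : 'M[R]_n) (b : 'cV[R]_n) (lam : R).
Hypothesis symA : A^T = A.
Implicit Types (x y w : 'cV[R]_n).

Lemma cttrs_objE x t :
  cttrs_obj A b lam x t = ttrs_obj A b x + 2^-1 * lam * (t - dotv x x).
Proof. by rewrite /cttrs_obj /ttrs_obj qform_shift; ring. Qed.

Lemma cttrs_obj_surface x : cttrs_obj A b lam x (dotv x x) = ttrs_obj A b x.
Proof. by rewrite cttrs_objE subrr mulr0 addr0. Qed.

Lemma cttrs_feas_surface alpha beta x :
  cttrs_feas alpha beta x (dotv x x) <-> ttrs_feas alpha beta x.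
Proof. by split=> [[] | fx] //; split=> //; apply/stack_normP. Qed.

Lemma sym_eigenvector :
  eigenvalue A lam -> exists2 w : 'cV[R]_n, A *m w = lam *: w & w != 0.
Proof.
case/eigenvalueP=> v vA v0; exists v^T; first by rewrite -[in LHS]symA -trmx_mul vA linearZ.
by rewrite trmx_eq0.
Qed.

Lemma eigenvector_descent :
  eigenvalue A lam ->
  exists w, [/\ A *m w = lam *: w, 0 < dotv w w & dotv b w <= 0].
Proof.
case/sym_eigenvector=> u Au u0; have upos := dotv_gt0 u0.
have [bu | bu] := lerP (dotv b u) 0; first by exists u.
exists (- u); split; first by rewrite mulmxN Au scalerN.
  by rewrite dotvNl dotvC dotvNl opprK.
by rewrite dotvC dotvNl dotvC oppr_le0 ltW.
Qed.

Lemma ttrs_obj_eigen_shift x w s : A *m w = lam *: w ->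
  ttrs_obj A b (x + s *: w) =
  cttrs_obj A b lam x (dotv (x + s *: w) (x + s *: w)) + s * dotv b w.
Proof.
move=> Aw; rewrite cttrs_objE /ttrs_obj !qformE mulmxDr -scalemxAr Aw.
rewrite !(dotvDl, dotvDr, dotvZl, dotvZr) (dotv_mulmx A w x) symA Aw dotvZl.
by rewrite (dotvC w x); ring.
Qed.

Lemma cttrs_relaxation_tight x t : eigenvalue A lam -> dotv x x <= t ->
  exists2 y, dotv y y = t & ttrs_obj A b y <= cttrs_obj A b lam x t.
Proof.
move=> lamA xt; have [w [Aw w0 bw]] := eigenvector_descent lamA.
have d0 : 0 <= t - dotv x x by rewrite subr_ge0.
have [s s0 hs] := quadratic_nonneg_root (dotv x w) w0 d0.
have yy : dotv (x + s *: w) (x + s *: w) = t.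
  rewrite !(dotvDl, dotvDr, dotvZl, dotvZr) (dotvC w x).
  by move: hs; set q := dotv w w; set p := dotv x w => hs; lra.
exists (x + s *: w) => //.
by rewrite ttrs_obj_eigen_shift // yy gerDl mulr_ge0_le0.
Qed.

End TrustRegion.

Theorem corollary6 (R : realType) (n : nat) (A : 'M[R]_n) (b : 'cV[R]_n)
    (alpha beta lam : R) :
  A^T = A -> alpha < beta -> is_lambda_min A lam ->
  forall xs : 'cV[R]_n,
    ttrs_global_sol A b alpha beta xs <->
    cttrs_global_sol A b lam alpha beta xs (dotv xs xs).
Proof.
move=> symA _ [lamA _] xs; split.
- case=> fxs opt; split; first exact/cttrs_feas_surface.
  move=> x t [tab /stack_normP xt].
  have [y yy ley] := cttrs_relaxation_tight b symA lamA xt.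
  rewrite cttrs_obj_surface //; apply: le_trans ley; apply: opt.
  by rewrite /ttrs_feas yy.
- case=> /cttrs_feas_surface fxs opt; split=> // x fx.
  by rewrite -!(cttrs_obj_surface A b lam) //; apply/opt/cttrs_feas_surface.
Qed.
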